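(* Let $G$ be a finite group with $R(G) \neq 1$. Then $|\mathrm{Solv}(G)| = |\mathrm{Solv}(G/R(G))|$.
   Context: $R(G)$ denotes the solvable radical of $G$, the largest solvable normal subgroup of $G$. For a finite group $G$ and $x \in G$, the solvabilizer of $x$ in $G$ is $\mathrm{Sol}_G(x) = \{y \in G : \langle x, y \rangle \text{ is solvable}\}$. $\mathrm{Solv}(G) = \{\mathrm{Sol}_G(x) : x \in G\}$ is the set of distinct solvabilizers of elements of $G$. *)

From mathcomp Require Import all_boot all_fingroup all_solvable.
Set Implicit Arguments. Unset Strict Implicit. Unset Printing Implicit Defensive.
Local Open Scope group_scope.

Definition solrad (gT : finGroupType) (G : {set gT}) : {set gT} :=
  <<\bigcup_(H : {group gT} | (H <| G) && solvable H) H>>.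

Definition solvabilizer (gT : finGroupType) (G : {set gT}) (x : gT) : {set gT} :=
  [set y in G | solvable <<[set x; y]>>].

Definition Solv (gT : finGroupType) (G : {set gT}) : {set {set gT}} :=
  [set solvabilizer G x | x in G].

From mathcomp Require Import all_boot all_fingroup all_solvable.

(* For a solvable normal subgroup R of G and x, y in G, the group <x, y> is
   solvable iff its image <xR, yR> in G/R is, since an extension of a solvable
   group by a solvable group is solvable. Hence Sol_G(x) is the full preimage
   in G of Sol_{G/R}(xR), so S |-> S/R maps Solv(G) bijectively onto
   Solv(G/R). The solvable radical is such an R, being the largest solvable
   normal subgroup. *)

Set Implicit Arguments.
Unset Strict Implicit.
Unset Printing Implicit Defensive.

Local Open Scope group_scope.

Section SolvableExtensions.

Variable gT : finGroupType.
Implicit Types H K : {group gT}.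

Lemma sol_joinY H K :
  solvable K -> H \subset 'N(K) -> solvable (H <*> K) = solvable (H / K).
Proof. by move=> solK nKH; rewrite (series_sol (H := K)) ?normalYr // solK quotientYidr. Qed.

Lemma solvableY H K :
  solvable H -> solvable K -> H \subset 'N(K) -> solvable (H <*> K).
Proof. by move=> solH solK nKH; rewrite sol_joinY // quotient_sol. Qed.

Lemma quotient_solE H K :
  solvable K -> H \subset 'N(K) -> solvable (H / K) = solvable H.
Proof.
move=> solK nKH; rewrite -sol_joinY //.
apply/idP/idP => [/solvableS-> // | solH]; first exact: joing_subl.
by rewrite sol_joinY ?quotient_sol.
Qed.

Lemma quotient_gen2 K x y : x \in 'N(K) -> y \in 'N(K) ->
  <<[set x; y]>> / K = <<[set coset K x; coset K y]>>.
Proof.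
move=> nKx nKy.
by rewrite quotient_gen ?quotientU ?quotient_set1 // subUset !sub1set nKx.
Qed.

End SolvableExtensions.

Section SolvableRadical.

Variables (gT : finGroupType) (G : {group gT}).

Canonical solrad_group := Eval hnf in [group of solrad G].

Lemma sub_solrad (H : {group gT}) : H <| G -> solvable H -> H \subset solrad G.
Proof.
by move=> nHG solH; apply/sub_gen/bigcup_sup; rewrite nHG.
Qed.

Lemma maxgroup_solrad (M : {group gT}) :
  [max M | (M <| G) && solvable M] -> solrad G = M.
Proof.
case/maxgroupP => /andP[nMG solM] maxM.
apply/eqP; rewrite eqEsubset sub_solrad // andbT gen_subG.
apply/bigcupsP => H /andP[nHG solH].
have nMH : H \subset 'N(M) := subset_trans (normal_sub nHG) (normal_norm nMG).
have PHM : (H <*> M <| G) && solvable (H <*> M) by rewrite normalY ?solvableY.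
by rewrite -(maxM _ PHM (joing_subr H M)) joing_subl.
Qed.

Lemma solrad_normal_sol : solrad G <| G /\ solvable (solrad G).
Proof.
have [M maxM] : {M : {group gT} | [max M | (M <| G) && solvable M]}.
  by apply: ex_maxgroup; exists 1%G; rewrite normal1 solvable1.
by rewrite (maxgroup_solrad maxM); case/maxgroupP: maxM => /andP[].
Qed.

End SolvableRadical.

Section SolvabilizersModSolvable.

Variables (gT : finGroupType) (G R : {group gT}).
Hypotheses (nRG : R <| G) (solR : solvable R).

Let nRG_norm : G \subset 'N(R) := normal_norm nRG.

Lemma mem_solvabilizer_quotient x y : x \in G ->
  (y \in solvabilizer G x) =
  (y \in G) && (coset R y \in solvabilizer (G / R) (coset R x)).
Proof.
move=> Gx; rewrite !inE; case Gy: (y \in G) => //=.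
have nRxy : <<[set x; y]>> \subset 'N(R).
  by rewrite gen_subG subUset !sub1set !(subsetP nRG_norm).
rewrite mem_quotient //= -quotient_gen2 ?(subsetP nRG_norm) //.
by rewrite quotient_solE.
Qed.

Lemma solvabilizer_quotient x : x \in G ->
  solvabilizer G x / R = solvabilizer (G / R) (coset R x).
Proof.
move=> Gx; apply/setP => u; apply/idP/idP.
  case/morphimP => y _; rewrite mem_solvabilizer_quotient // => /andP[_ Sy] ->.
  exact: Sy.
move=> Su; have /morphimP[y Ny Gy def_u] : u \in G / R by case/setIdP: Su.
rewrite def_u in Su *; apply: mem_morphim => //.
by rewrite mem_solvabilizer_quotient // Gy.
Qed.

Lemma quotient_solvabilizer_inj x1 x2 : x1 \in G -> x2 \in G ->
  solvabilizer G x1 / R = solvabilizer G x2 / R ->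
  solvabilizer G x1 = solvabilizer G x2.
Proof.
move=> Gx1 Gx2; rewrite !solvabilizer_quotient // => eqS.
by apply/setP => y; rewrite !mem_solvabilizer_quotient // eqS.
Qed.

Lemma Solv_quotient : Solv (G / R) = [set S / R | S in Solv G].
Proof.
rewrite /Solv -!imset_comp (setIidPr nRG_norm).
by apply: eq_in_imset => x Gx /=; rewrite solvabilizer_quotient.
Qed.

Lemma card_Solv_quotient : #|Solv (G / R)| = #|Solv G|.
Proof.
rewrite Solv_quotient card_in_imset //.
by move=> _ _ /imsetP[x1 Gx1 ->] /imsetP[x2 Gx2 ->]; apply: quotient_solvabilizer_inj.
Qed.

End SolvabilizersModSolvable.

Theorem lemma2p6 (gT : finGroupType) (G : {group gT}) :
  solrad G != 1 ->
  #|Solv G| = #|Solv (G / solrad G)|.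
Proof.
have [nRG solR] := solrad_normal_sol G.
by rewrite card_Solv_quotient.
Qed.
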